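(* Let $A$ be a commutative ring, $p\ge1$, and $W$, $E$ as defined below. Let $F=\{F_i\}_{i\ge0}$ be a graded left $W$-module (so $F_i=0$ for $i<0$) with $F_0\neq0$. Then $F_i\ne0$ for every $0\le i\le p$. Moreover, if $F_i=0$ for all $i\ge p+1$, then the map $W\otimes_AF_0\to F$, $w\otimes f\mapsto wf$, induces an isomorphism of graded left $W$-modules \[ E\otimes_AF_0\xrightarrow{\ \cong\ }F . \]
   Context: $W$ is the graded $A$-algebra $A\langle s_1,\dots,s_p,t_1,\dots,t_p\rangle/(s_it_j+t_js_i-\delta_{ij}\mid1\le i,j\le p)$, where $A\langle\cdots\rangle$ is the free associative $A$-algebra, $|s_i|=1$, $|t_i|=-1$, and $\delta_{ij}$ is the Kronecker delta. $E$ is the quotient of $W$ by the left ideal generated by the elements $t_i$, $s_i^2$, and $s_is_j+s_js_i$ for $1\le i,j\le p$; it is a graded left $W$-module, which as an $A$-module is the exterior algebra $A[\boldsymbol s]$ on $s_1,\dots,s_p$ (free with basis the monomials $s_{i_1}\cdots s_{i_n}$, $i_1<\cdots<i_n$), with $t_i$ acting as graded derivations satisfying $t_i\cdot s_j=\delta_{ij}$. $E\otimes_AF_0$ is a graded left $W$-module via the action on $E$, with $F_0$ in degree $0$. *)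

From HB Require Import structures.
From mathcomp Require Import all_boot all_order all_algebra.
Set Implicit Arguments. Unset Strict Implicit. Unset Printing Implicit Defensive.
Import GRing.Theory.
Local Open Scope ring_scope.

(* A graded left W-module F = {F_i}_{i >= 0} (F_i = 0 for i < 0 is encoded by
   indexing over nat), where
   W = A<s_1..s_p,t_1..t_p>/(s_i t_j + t_j s_i - delta_ij), |s_i| = 1, |t_i| = -1.
   By the universal property of the free algebra and its quotient, such a module
   is exactly: A-modules F_n, A-linear maps s_k : F_n -> F_{n+1},
   t_k : F_{n+1} -> F_n (t_k : F_0 -> F_{-1} = 0 is zero) satisfying the
   relations s_k t_l + t_l s_k = delta_kl in every degree.
   Generators are indexed by 'I_p (0-based). *)
Record gradedWmod (A : comPzRingType) (p : nat) := GradedWmod {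
  gcomp : nat -> lmodType A;
  sact : forall (k : 'I_p) (n : nat), {linear gcomp n -> gcomp n.+1};
  tact : forall (k : 'I_p) (n : nat), {linear gcomp n.+1 -> gcomp n};
  (* degree 0: s_k t_l x = 0 since t_l x lies in F_{-1} = 0 *)
  Wrel0 : forall (k l : 'I_p) (x : gcomp 0),
    tact l 0 (sact k 0 x) = (k == l)%:R *: x;
  WrelS : forall (k l : 'I_p) (n : nat) (x : gcomp n.+1),
    sact k n (tact l n x) + tact l n.+1 (sact k n.+1 x) = (k == l)%:R *: x
}.
Arguments gcomp {A p} g n : rename.
Arguments sact {A p} g k n : rename.
Arguments tact {A p} g k n : rename.

Fixpoint smono (A : comPzRingType) (p : nat) (F : gradedWmod A p) (n : nat)
  : n.-tuple 'I_p -> gcomp F 0 -> gcomp F n :=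
  match n return n.-tuple 'I_p -> gcomp F 0 -> gcomp F n with
  | 0 => fun _ f => f
  | m.+1 => fun t f => sact F (thead t) m (@smono A p F m (behead_tuple t) f)
  end.

(* Strictly increasing n-tuples i1 < ... < in of generator indices: they index
   the A-basis monomials s_{i1}...s_{in} of E = A[s] in degree n. *)
Definition incr_tuple (p n : nat) :=
  {t : n.-tuple 'I_p | sorted (fun i j : 'I_p => (i < j)%N) t}.

(* Degree-n part of E (x)_A F_0, using the monomial basis of E:
   (E (x)_A F_0)_n = (+)_{I increasing, |I| = n} s_I (x) F_0
   ~= functions from increasing n-tuples to F_0.
   Degree-n part of the map  E (x)_A F_0 -> F,  s_I (x) f |-> s_I f. *)
Definition EtensF0_to_F (A : comPzRingType) (p : nat) (F : gradedWmod A p)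
  (n : nat) (c : {ffun incr_tuple p n -> gcomp F 0}) : gcomp F n :=
  \sum_(I : incr_tuple p n) @smono A p F n (val I) (c I).

From Pilot Require Import Defs.
From HB Require Import structures.
From mathcomp Require Import all_boot all_order all_algebra.
From mathcomp Require Import zify.
Import GRing.Theory.
Local Open Scope ring_scope.

(* The monomials s_I f (I increasing) are detected by the contractions
   t_{j_n} ... t_{j_1}: for increasing I and J of the same length the
   contraction of s_I f along J is [I = J] f.  This gives the injectivity of
   E (x) F_0 -> F and the nonvanishing of F_i for i <= p, with no assumption on
   the top degree.  If F vanishes above degree p, an element y of positive
   degree with t_l y = 0 for all l is 0: s_l y is then annihilated by the t_k,
   k <> l, while y = t_l s_l y, so adjoining all p generators reaches a
   vanishing degree.  Consequently every operator of degree 2 (resp. -2)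
   that commutes with the t_k (resp. the s_k) vanishes; this applies to s_k^2,
   s_k s_l + s_l s_k, t_k^2 and t_k t_l + t_l t_k.  The last two let any
   contraction be rewritten as +- a contraction along an increasing sequence
   (or 0), so an element whose increasing contractions all vanish is 0, which
   gives surjectivity. *)

Lemma cross_subrD (V : zmodType) (a b c d : V) : a - b + c + (b - a + d) = c + d.
Proof. by rewrite addrACA -opprB addNr add0r. Qed.

Section GradedWmodule.
Context {A : comPzRingType} {p : nat} (F : gradedWmod A p).
Local Notation G := (gcomp F).
Local Notation s := (sact F).
Local Notation t := (tact F).
Local Notation smono := (@smono A p F _).
Local Notation EtensF0_to_F n := (@EtensF0_to_F A p F n).
Local Notation ltord := (fun i j : 'I_p => (i < j)%N).

Lemma ltord_trans : transitive ltord.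
Proof. by move=> j i k; apply: ltn_trans. Qed.

Lemma tact_sact k l n (x : G n.+1) :
  t l n.+1 (s k n.+1 x) = (k == l)%:R *: x - s k n (t l n x).
Proof. by rewrite -(WrelS k l x) addrAC subrr add0r. Qed.

Lemma sact_tact k l n (x : G n.+1) :
  s k n (t l n x) = (k == l)%:R *: x - t l n.+1 (s k n.+1 x).
Proof. by rewrite -(WrelS k l x) addrK. Qed.

Lemma tact_sact0_neq k l (x : G 0) : k != l -> t l 0 (s k 0 x) = 0.
Proof. by move=> /negbTE kl; rewrite Wrel0 kl scale0r. Qed.

Lemma tact_sact_neq k l n (x : G n.+1) : k != l ->
  t l n.+1 (s k n.+1 x) = - s k n (t l n x).
Proof. by move=> /negbTE kl; rewrite tact_sact kl scale0r sub0r. Qed.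

Lemma tact_sact_sact0 j k l (f : G 0) :
  t j 1 (s k 1 (s l 0 f)) = (k == j)%:R *: s l 0 f - (l == j)%:R *: s k 0 f.
Proof. by rewrite tact_sact Wrel0 linearZ. Qed.

Lemma tact_sact_sact j k l n (x : G n.+1) :
  t j n.+2 (s k n.+2 (s l n.+1 x)) =
  (k == j)%:R *: s l n.+1 x - (l == j)%:R *: s k n.+1 x + s k n.+1 (s l n (t j n x)).
Proof. by rewrite tact_sact tact_sact linearB linearZ opprB addrCA addrC. Qed.

Lemma sact_tact_tact k j l m (w : G m.+2) :
  s k m (t j m (t l m.+1 w)) =
  (k == j)%:R *: t l m.+1 w - (k == l)%:R *: t j m.+1 w + t j m.+1 (t l m.+2 (s k m.+2 w)).
Proof. by rewrite sact_tact sact_tact linearB linearZ opprB addrCA addrC. Qed.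

Lemma eq0_of_sact_eq0 (S : {set 'I_p}) m (u : G m) :
  (m < #|S|)%N -> {in S, forall l, s l m u = 0} -> u = 0.
Proof.
elim: m S u => [|m IH] S u ltmS uS;
  have [l lS] : exists l, l \in S by apply/card_gt0P; lia.
  by have := Wrel0 l l u; rewrite uS // raddf0 eqxx scale1r.
have tu0 : t l m u = 0.
  apply: (IH (S :\ l)); first by move: ltmS; rewrite (cardsD1 l S) lS; lia.
  move=> k; rewrite !inE => /andP[kl kS].
  by apply/eqP; rewrite -oppr_eq0 -tact_sact_neq // uS // raddf0.
by have := WrelS l l u; rewrite tu0 uS // !raddf0 addr0 eqxx scale1r.
Qed.

(* Junk value: the contraction is 0 unless [size J = n]. *)
Fixpoint contract (J : seq 'I_p) (n : nat) : G n -> G 0 :=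
  match J, n return G n -> G 0 with
  | [::], 0 => id
  | j :: J', m.+1 => fun y => contract J' m (t j m y)
  | _, _ => fun _ => 0
  end.

Lemma contract_is_linear J n : linear (contract J n).
Proof.
elim: J n => [|j J IH] [|n] c x y //=; rewrite ?scaler0 ?addr0 //.
by rewrite linearP IH.
Qed.

HB.instance Definition _ J n :=
  GRing.isLinear.Build A (G n) (G 0) *:%R (contract J n) (contract_is_linear J n).

Lemma tact_smono_notin m (I : m.+1.-tuple 'I_p) j (f : G 0) :
  j \notin I -> t j m (smono I f) = 0.
Proof.
elim: m I => [|m IH] I; rewrite [in j \notin I](tuple_eta I) inE negb_or => /andP[jI jI'] /=.
  by rewrite tact_sact0_neq // eq_sym.
by rewrite tact_sact_neq 1?eq_sym // IH // raddf0 oppr0.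
Qed.

Lemma contract_sact_notin J i m (x : G m) :
  i \notin J -> contract J m.+1 (s i m x) = 0.
Proof.
elim: J m x => [|j J IH] [|m] x //=; rewrite in_cons negb_or => /andP[ij iJ].
  by rewrite tact_sact0_neq // raddf0.
by rewrite tact_sact_neq // raddfN /= IH // oppr0.
Qed.

Lemma contract_smono n (I J : n.-tuple 'I_p) (f : G 0) :
  sorted ltord I -> sorted ltord J -> contract J n (smono I f) = (I == J)%:R *: f.
Proof.
elim: n I J => [|n IH] I J; first by rewrite (tuple0 I) (tuple0 J) eqxx scale1r.
have -> : (I == J) = (thead I == thead J) && (behead_tuple I == behead_tuple J).
  by rewrite {1}(tuple_eta I) {1}(tuple_eta J).
have tvalS (K : n.+1.-tuple 'I_p) : tval K = thead K :: behead_tuple K.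
  by rewrite {1}(tuple_eta K).
rewrite (tvalS I) {1 2}(tvalS J) => sI sJ.
change (contract (behead_tuple J) n (t (thead J) n
  (s (thead I) n (smono (behead_tuple I) f))) =
  ((thead I == thead J) && (behead_tuple I == behead_tuple J))%:R *: f).
move: (thead I) (thead J) (behead_tuple I) (behead_tuple J) sI sJ => i j I' J' sI sJ {I J}.
have IH' := IH I' J' (path_sorted sI) (path_sorted sJ).
case: n I' J' sI sJ {IH tvalS} IH' => [|m] I' J' sI sJ IH'.
  by rewrite Wrel0 linearZ /= IH' scalerA -natrM mulnb.
have contract_tail0 : contract J' m.+1 (s i m (t j m (smono I' f))) = 0.
  have [iJ'|iJ'] := boolP (i \in J'); last exact: contract_sact_notin.
  have ji : (j < i)%N := allP (order_path_min ltord_trans sJ) i iJ'.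
  rewrite tact_smono_notin ?raddf0 //; apply/negP => /(allP (order_path_min ltord_trans sI)).
  by move=> /= /(ltn_trans ji); rewrite ltnn.
by rewrite tact_sact linearB linearZ /= contract_tail0 subr0 IH' scalerA -natrM mulnb.
Qed.

Lemma smono_neq0 n (I : n.-tuple 'I_p) (f : G 0) :
  sorted ltord I -> f != 0 -> smono I f != 0.
Proof.
move=> sI; apply: contraNneq => If0.
by have := @contract_smono _ I I f sI sI; rewrite If0 raddf0 eqxx scale1r => <-.
Qed.

Lemma exists_incr_tuple i : (i <= p)%N -> exists I : i.-tuple 'I_p, sorted ltord I.
Proof.
move=> le_ip; have sz : size (take i (enum 'I_p)) == i.
  by rewrite size_takel ?size_enum_ord.
exists (Tuple sz); apply: take_sorted.
by have := iota_ltn_sorted 0 p; rewrite -val_enum_ord sorted_map.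
Qed.

Definition F_to_EtensF0 n (y : G n) : {ffun incr_tuple p n -> G 0} :=
  [ffun I => contract (val (val I)) n y].

Lemma EtensF0_to_FK n : cancel (EtensF0_to_F n) (@F_to_EtensF0 n).
Proof.
move=> c; apply/ffunP => J; rewrite ffunE /Defs.EtensF0_to_F raddf_sum (bigD1 J) //=.
rewrite contract_smono ?(valP J) // eqxx scale1r big1 ?addr0 // => I IJ.
by rewrite contract_smono ?(valP J) ?(valP I) // (inj_eq val_inj) (negbTE IJ) scale0r.
Qed.

Section TopDegree.
Hypothesis F_top : forall i, (p < i)%N -> forall x : G i, x = 0.

Lemma eq0_of_tact_eq0_in (S : {set 'I_p}) m (y : G m.+1) :
  (p < m.+1 + #|S|)%N -> {in S, forall l, t l m y = 0} -> y = 0.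
Proof.
move Sk: #|S| => k; elim: k S m y Sk => [|k IH] S m y Sk ltp yS.
  by apply: F_top; lia.
have [l lS] : exists l, l \in S by apply/card_gt0P; lia.
have sy0 : s l m.+1 y = 0.
  apply: (IH (S :\ l)) => [||j]; first by move: Sk; rewrite (cardsD1 l S) lS; lia.
    by lia.
  rewrite !inE => /andP[jl jS].
  by rewrite tact_sact_neq 1?eq_sym // yS // raddf0 oppr0.
by have := WrelS l l y; rewrite yS // sy0 !raddf0 addr0 eqxx scale1r.
Qed.

Lemma eq0_of_tact_eq0 m (y : G m.+1) : (forall l, t l m y = 0) -> y = 0.
Proof.
move=> yt0; apply: (@eq0_of_tact_eq0_in [set: 'I_p]) => [|l _ //].
by rewrite cardsT card_ord; lia.
Qed.

Lemma raising_commute_tact_eq0 (X : forall n, G n -> G n.+2) :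
  (forall j f, t j 1 (X 0 f) = 0) ->
  (forall j n x, t j n.+2 (X n.+1 x) = X n (t j n x)) -> forall n x, X n x = 0.
Proof.
move=> X0 Xt; elim=> [|n IH] x; apply: eq0_of_tact_eq0 => j; first exact: X0.
by rewrite Xt IH.
Qed.

Lemma lowering_commute_sact_eq0 (X : forall m, G m.+2 -> G m) :
  (forall m, X m 0 = 0) ->
  (forall m k w, s k m (X m w) = X m.+1 (s k m.+2 w)) -> forall m w, X m w = 0.
Proof.
move=> X0 Xs m; move Dd: (p - m)%N => d; elim: d m Dd => [|d IH] m Dd w.
  by rewrite (F_top _ _ w) ?X0 //; lia.
apply: (@eq0_of_sact_eq0 [set: 'I_p]); first by rewrite cardsT card_ord; lia.
by move=> k _; rewrite Xs (IH m.+1) //; lia.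
Qed.

Lemma sact_sact_eq0 k n (x : G n) : s k n.+1 (s k n x) = 0.
Proof.
move: n x; apply: (raising_commute_tact_eq0 (fun n x => s k n.+1 (s k n x))).
  by move=> j f; rewrite tact_sact_sact0 subrr.
by move=> j n x; rewrite tact_sact_sact subrr add0r.
Qed.

Lemma sact_sact_anticomm k l n (x : G n) :
  s k n.+1 (s l n x) + s l n.+1 (s k n x) = 0.
Proof.
move: n x; apply: (raising_commute_tact_eq0
  (fun n x => s k n.+1 (s l n x) + s l n.+1 (s k n x))) => [j f|j n x].
  by rewrite raddfD /= !tact_sact_sact0 -opprB addNr.
by rewrite raddfD /= !tact_sact_sact cross_subrD.
Qed.

Lemma tact_tact_eq0 l m (w : G m.+2) : t l m (t l m.+1 w) = 0.
Proof.
move: m w; apply: (lowering_commute_sact_eq0 (fun m w => t l m (t l m.+1 w))).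
  by move=> m; rewrite !raddf0.
by move=> m k w; rewrite sact_tact_tact subrr add0r.
Qed.

Lemma tact_tact_anticomm j l m (w : G m.+2) :
  t j m (t l m.+1 w) = - t l m (t j m.+1 w).
Proof.
apply/eqP; rewrite -addr_eq0; apply/eqP; move: m w.
apply: (lowering_commute_sact_eq0
  (fun m w => t j m (t l m.+1 w) + t l m (t j m.+1 w))) => [m|m k w].
  by rewrite !raddf0 addr0.
by rewrite raddfD /= !sact_tact_tact cross_subrD.
Qed.

Lemma contract_cons_sorted (K : seq 'I_p) : sorted ltord K -> forall l n,
  (forall w : G n, contract (l :: K) n w = 0) \/
  exists J : seq 'I_p, [/\ size J = (size K).+1, sorted ltord J, {subset J <= l :: K}
     & exists c : A, forall w : G n, contract (l :: K) n w = c *: contract J n w].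
Proof.
elim: K => [|j K IH] sK l n.
  by right; exists [:: l]; split => //; exists 1 => w; rewrite scale1r.
have jK := order_path_min ltord_trans sK.
case: (ltngtP l j) => [lj|jl|/val_inj <-].
- right; exists (l :: j :: K); split => //=; first by rewrite lj.
  by exists 1 => w; rewrite scale1r.
- case: n => [|[|m]]; [by left..|].
  have [K0|[J [szJ sJ JlK [c Kc]]]] := IH (path_sorted sK) l m.+1.
    left => w /=; rewrite tact_tact_anticomm raddfN /=.
    by have /= -> := K0 (t j m.+1 w); rewrite oppr0.
  right; exists (j :: J); split => /=; first by rewrite szJ.
  + rewrite (path_sortedE ltord_trans) sJ andbT.
    apply/allP => x /JlK; rewrite in_cons => /orP[/eqP -> //|].
    exact: (allP jK).
  + move=> x; rewrite !in_cons => /orP[->|/JlK]; first by rewrite orbT.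
    by rewrite in_cons => /orP[->|->]; rewrite ?orbT.
  + exists (- c) => w /=; rewrite tact_tact_anticomm raddfN /=.
    by have /= -> := Kc (t j m.+1 w); rewrite scaleNr.
- by left; case: n => [|[|m]] w //=; rewrite tact_tact_eq0 raddf0.
Qed.

Lemma eq0_of_contract_eq0 n (y : G n) :
  (forall J, size J = n -> sorted ltord J -> contract J n y = 0) -> y = 0.
Proof.
elim: n y => [|n IH] y yJ; first exact: (yJ [::]).
apply: eq0_of_tact_eq0 => l; apply: IH => K szK sK.
have [K0|[J [szJ sJ _ [c Kc]]]] := contract_cons_sorted K sK l n.+1.
  exact: (K0 y).
by have /= -> := Kc y; rewrite yJ ?scaler0 // szJ szK.
Qed.

Lemma F_to_EtensF0K n : cancel (@F_to_EtensF0 n) (EtensF0_to_F n).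
Proof.
move=> y; apply/eqP; rewrite -subr_eq0; apply/eqP.
apply: eq0_of_contract_eq0 => J szJ sJ.
have szJ' : size J == n by rewrite szJ.
pose IJ : incr_tuple p n := exist _ (Tuple szJ') sJ.
have := congr1 (fun c : {ffun incr_tuple p n -> G 0} => c IJ)
  (EtensF0_to_FK n (F_to_EtensF0 n y)).
by rewrite linearB !ffunE /= => ->; rewrite subrr.
Qed.

End TopDegree.
End GradedWmodule.

Theorem propositionA3 (A : comPzRingType) (p : nat) (F : gradedWmod A p) :
  (1 <= p)%N ->
  (exists x : gcomp F 0, x != 0) ->
  (forall i : nat, (i <= p)%N -> exists x : gcomp F i, x != 0) /\
  ((forall i : nat, (p + 1 <= i)%N -> forall x : gcomp F i, x = 0) ->
    [/\ (* W (x)_A F_0 -> F factors through E (x)_A F_0: the left-ideal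
           generators s_k^2 and s_k s_l + s_l s_k kill F_0 (t_k kills F_0
           automatically, F_{-1} = 0) *)
        (forall (k : 'I_p) (f : gcomp F 0), sact F k 1 (sact F k 0 f) = 0),
        (forall (k l : 'I_p) (f : gcomp F 0),
            sact F k 1 (sact F l 0 f) + sact F l 1 (sact F k 0 f) = 0)
      & (* and the induced map E (x)_A F_0 -> F is bijective in each degree *)
        forall n : nat, bijective (@EtensF0_to_F A p F n)]).
Proof.
move=> _ [f0 f0_neq0]; split.
  move=> i /exists_incr_tuple[I sI].
  by exists (smono I f0); apply: smono_neq0.
move=> top_p1; have top i : (p < i)%N -> forall x : gcomp F i, x = 0.
  by move=> lt_pi; apply: top_p1; rewrite addn1.
split=> [k f|k l f|n]; first exact: sact_sact_eq0.
  exact: sact_sact_anticomm.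
exact: Bijective (EtensF0_to_FK F n) (F_to_EtensF0K F top n).
Qed.
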